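(* Let $K\in{\rm Alg}(V)$ be a unital commutative associative $F$-algebra and let $f,g\in{\rm Gl}(V)$. Write $L(x)$ for left multiplication by $x$ in $K$. The following are equivalent: (i) $K^{(f,g)}$ is a unital algebra; (ii) there exists $w\in K^\times$ with $K^{(f,g)}=K^{(w)}$; (iii) $K^{(f,g)}\cong K$. Moreover, in this case $w$ is uniquely determined, $w^{-1}$ is the unit element of $K^{(f,g)}$, and there exist $u,v\in K$ with $w=uv$, $f=L(u)$ and $g=L(v)$. Finally, an $F$-linear map $\varphi:K^{(f,g)}\to K$ is an algebra isomorphism if and only if $\varphi=\sigma\circ L(w)$ for some $\sigma\in{\rm Aut}_F(K)$.
   Context: $F$ is a field and $V$ is a finite-dimensional $F$-vector space. ${\rm Alg}(V)$ denotes the set of $F$-bilinear multiplications on $V$; $xAy$ denotes the product of $x,y$ in $A\in{\rm Alg}(V)$. For $f,g\in{\rm End}_F(V)$ the principal Albert homotope $A^{(f,g)}$ is $V$ with product $xA^{(f,g)}y=f(x)A\,g(y)$. For $w\in K^\times$ (the invertible elements of $K$), the Jordan isotope $K^{(w)}\in{\rm Alg}(V)$ is defined by $xK^{(w)}y=xwy$. *)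

From HB Require Import structures.
From mathcomp Require Import all_boot all_order all_algebra.
Set Implicit Arguments. Unset Strict Implicit. Unset Printing Implicit Defensive.
Import GRing.Theory.
Local Open Scope ring_scope.

Section Defs.
Variables (F : fieldType) (V : vectType F).

(* An element of Alg(V): an F-bilinear multiplication on V. *)
Definition is_bilinear (m : V -> V -> V) : Prop :=
  (forall x, linear (m x)) /\ (forall y, linear (fun x => m x y)).

Definition is_unit_elt (m : V -> V -> V) (e : V) : Prop :=
  forall x, m e x = x /\ m x e = x.

Definition unital (m : V -> V -> V) : Prop := exists e, is_unit_elt m e.

Definition commutative_alg (m : V -> V -> V) : Prop := forall x y, m x y = m y x.

Definition associative_alg (m : V -> V -> V) : Prop :=
  forall x y z, m (m x y) z = m x (m y z).

Definition invertible_elt (m : V -> V -> V) (w : V) : Prop :=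
  exists e w', [/\ is_unit_elt m e, m w w' = e & m w' w = e].

Definition homotope (m : V -> V -> V) (f g : V -> V) : V -> V -> V :=
  fun x y => m (f x) (g y).

Definition isotope (m : V -> V -> V) (w : V) : V -> V -> V :=
  fun x y => m (m x w) y.

Definition alg_iso (A B : V -> V -> V) (phi : 'End(V)) : Prop :=
  bijective phi /\ forall x y, phi (A x y) = B (phi x) (phi y).

Definition alg_isomorphic (A B : V -> V -> V) : Prop :=
  exists phi : 'End(V), alg_iso A B phi.

End Defs.

From HB Require Import structures.
From mathcomp Require Import all_boot all_order all_algebra.
Set Implicit Arguments. Unset Strict Implicit. Unset Printing Implicit Defensive.
Import GRing.Theory.
Local Open Scope ring_scope.

(* If [e'] is the unit of [K^(f,g)], then [f(x) g(e') = x] and [f(e') g(x) = x]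
   force [f] and [g] to be multiplications [L(u)], [L(v)] by [u = f(1)] and
   [v = g(1)], with [u v] invertible; so [K^(f,g) = K^(uv)].  For an invertible
   [w], [L(w) : K^(w) -> K] is an isomorphism, and every other isomorphism
   differs from it by an automorphism of [K]. *)

Section PointwiseEquality.
Variables (F : fieldType) (V : vectType F).
Implicit Types (A B : V -> V -> V) (phi : 'End(V)).

Lemma eq_is_unit_elt A B x : A =2 B -> is_unit_elt A x <-> is_unit_elt B x.
Proof. by move=> eqAB; split=> Hx y; have := Hx y; rewrite !eqAB. Qed.

Lemma eq_alg_iso A B C phi : A =2 B -> alg_iso A C phi <-> alg_iso B C phi.
Proof.
by move=> eqAB; split=> -[bij_phi Hphi]; split=> // x y; rewrite -Hphi ?eqAB.
Qed.

Lemma lfun_of_linear (h : V -> V) : linear h -> exists L : 'End(V), L =1 h.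
Proof.
move=> lin_h.
pose hl : {linear V -> V} := HB.pack h (GRing.isLinear.Build F V V *:%R h lin_h).
by exists (linfun hl) => x; rewrite lfunE.
Qed.

End PointwiseEquality.

Section UnitalCommutativeAssociative.
Variables (F : fieldType) (V : vectType F) (m : V -> V -> V) (e : V).
Hypotheses (mC : commutative_alg m) (mA : associative_alg m)
  (me : is_unit_elt m e).

Lemma mul1m x : m e x = x. Proof. by case: (me x). Qed.

Lemma mulm1 x : m x e = x. Proof. by case: (me x). Qed.

Lemma mulmCA x y z : m x (m y z) = m y (m x z).
Proof. by rewrite -mA (mC x y) mA. Qed.

Lemma unit_elt_unique e0 : is_unit_elt m e0 -> e0 = e.
Proof. by move=> me0; rewrite -(mulm1 e0); case: (me0 e). Qed.

Lemma invertible_elt_cancel w :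
  invertible_elt m w -> exists w', cancel (m w) (m w') /\ cancel (m w') (m w).
Proof.
move=> [e0 [w' [me0 ww' w'w]]]; rewrite (unit_elt_unique me0) in ww' w'w.
by exists w'; split=> x; rewrite -mA ?ww' ?w'w mul1m.
Qed.

Lemma isotope_unit w w' : m w w' = e -> is_unit_elt (isotope m w) w'.
Proof. by move=> ww' x; rewrite /isotope (mC w') ww' mul1m mA ww' mulm1. Qed.

Lemma isotope_inj w1 w2 : isotope m w1 =2 isotope m w2 -> w1 = w2.
Proof. by move=> /(_ e e); rewrite /isotope !mul1m !mulm1. Qed.

Lemma alg_iso_unital A phi : alg_iso A m phi -> unital A.
Proof.
move=> [[psi phiK psiK] Hphi]; exists (psi e) => x.
by split; apply: (can_inj phiK); rewrite Hphi psiK ?mul1m ?mulm1.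
Qed.

Section UnitalHomotope.
Variables (f g : V -> V) (e' : V).
Hypothesis unit_e' : is_unit_elt (homotope m f g) e'.

Let fe'g x : m (f e') (g x) = x. Proof. by case: (unit_e' x). Qed.
Let fge' x : m (f x) (g e') = x. Proof. by case: (unit_e' x). Qed.

Lemma homotope_unit_mull x : f x = m (f e) x.
Proof. by rewrite -{2}(fge' x) mulmCA fge' mulm1. Qed.

Lemma homotope_unit_mulr x : g x = m (g e) x.
Proof. by rewrite -{2}(fe'g x) -mA (mC (g e)) fe'g mul1m. Qed.

Lemma homotope_unit_invertible : invertible_elt m (m (f e) (g e)).
Proof.
have ae : m (f e') (g e) = e by rewrite fe'g.
have ec : m (f e) (g e') = e by rewrite fge'.
have inv : m (m (f e) (g e)) (m (g e') (f e')) = e.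
  by rewrite mA (mulmCA (g e)) (mC (g e)) ae mulm1 ec.
by exists e, (m (g e') (f e')); split; rewrite // mC.
Qed.

End UnitalHomotope.

Lemma homotope_mul_isotope (u v : V) :
  homotope m (m u) (m v) =2 isotope m (m u v).
Proof. by move=> x y; rewrite /homotope /isotope !mA mulmCA. Qed.

Lemma unital_homotope_isotope f g : unital (homotope m f g) ->
  exists u v, [/\ invertible_elt m (m u v), f =1 m u, g =1 m v
                & homotope m f g =2 isotope m (m u v)].
Proof.
move=> [e' unit_e']; exists (f e), (g e).
have fE := homotope_unit_mull unit_e'; have gE := homotope_unit_mulr unit_e'.
split=> //; first exact: homotope_unit_invertible unit_e'.
by move=> x y; rewrite /homotope fE gE -homotope_mul_isotope.
Qed.

Hypothesis m_linear : forall x, linear (m x).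

Lemma isotope_lmul_iso w : invertible_elt m w ->
  exists2 L : 'End(V), L =1 m w & alg_iso (isotope m w) m L.
Proof.
move=> /invertible_elt_cancel [w' [wK w'K]].
have [L LE] := lfun_of_linear (m_linear w).
exists L => //; split; first by exists (m w') => x; rewrite LE ?wK ?w'K.
by move=> x y; rewrite !LE /isotope !mA.
Qed.

(* The automorphism is [sigma = phi \o L(w^-1)]. *)
Lemma isotope_isoP w phi : invertible_elt m w ->
  alg_iso (isotope m w) m phi <->
  exists sigma : 'End(V), alg_iso m m sigma /\ forall x, phi x = sigma (m w x).
Proof.
move=> /invertible_elt_cancel [w' [wK w'K]]; split.
  move=> [[psi phiK psiK] Hphi].
  have [Lw' Lw'E] := lfun_of_linear (m_linear w').
  exists (phi \o Lw')%VF; split; last by move=> x; rewrite comp_lfunE Lw'E wK.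
  split.
    by exists (m w \o psi) => x; rewrite /= comp_lfunE Lw'E ?phiK ?wK ?w'K ?psiK.
  move=> x y; rewrite !comp_lfunE !Lw'E -Hphi /isotope.
  by rewrite (mC _ w) w'K mulmCA.
move=> [sigma [[[tau sigmaK tauK] Hsigma] phiE]]; split.
  by exists (m w' \o tau) => x; rewrite /= phiE ?sigmaK ?wK ?w'K ?tauK.
by move=> x y; rewrite !phiE /isotope -Hsigma !mA.
Qed.

End UnitalCommutativeAssociative.

Theorem lemma1p9 (F : fieldType) (V : vectType F) (m : V -> V -> V)
  (f g : 'End(V)) :
  is_bilinear m -> unital m -> commutative_alg m -> associative_alg m ->
  bijective f -> bijective g ->
  [/\ (unital (homotope m f g) <->
         exists w, invertible_elt m w /\
           forall x y, homotope m f g x y = isotope m w x y),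
      ((exists w, invertible_elt m w /\
           forall x y, homotope m f g x y = isotope m w x y) <->
         alg_isomorphic (homotope m f g) m)
    & (unital (homotope m f g) ->
       exists w, invertible_elt m w /\
         (forall x y, homotope m f g x y = isotope m w x y) /\
         (forall w2, invertible_elt m w2 ->
            (forall x y, homotope m f g x y = isotope m w2 x y) -> w2 = w) /\
         (forall e w', is_unit_elt m e -> m w w' = e ->
            is_unit_elt (homotope m f g) w') /\
         (exists u v, [/\ w = m u v, forall x, f x = m u x & forall x, g x = m v x]) /\
         (forall phi : 'End(V), alg_iso (homotope m f g) m phi <->
            exists sigma : 'End(V), alg_iso m m sigma /\
              forall x, phi x = sigma (m w x)))].
Proof.
move=> [m_lin _] [e me] mC mA _ _.
have unit_of_isotope w w' e0 : is_unit_elt m e0 -> m w w' = e0 ->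
    homotope m f g =2 isotope m w -> is_unit_elt (homotope m f g) w'.
  move=> me0 ww' hE; rewrite (unit_elt_unique me me0) in ww'.
  by apply/(eq_is_unit_elt _ hE); exact: isotope_unit.
have iso_of_isotope w : invertible_elt m w -> homotope m f g =2 isotope m w ->
    alg_isomorphic (homotope m f g) m.
  move=> wI hE; have [L _ Liso] := isotope_lmul_iso mA me m_lin wI.
  by exists L; apply/(eq_alg_iso _ _ hE).
have isotope_of_unital := unital_homotope_isotope mC mA me.
split.
- split; first by move=> /isotope_of_unital [u [v [wI _ _ hE]]]; exists (m u v).
  move=> [w [[e0 [w' [me0 ww' _]]] hE]]; exists w'.
  exact: unit_of_isotope me0 ww' hE.
- split; first by move=> [w [wI hE]]; exact: iso_of_isotope wI hE.
  by move=> [phi /(alg_iso_unital me) /isotope_of_unital [u [v [wI _ _ hE]]]];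
    exists (m u v).
move=> /isotope_of_unital [u [v [wI fE gE hE]]]; exists (m u v).
split=> //; split=> //; split.
  by move=> w2 _ hE2; apply: (isotope_inj me) => x y; rewrite -hE -hE2.
split; first by move=> e0 w' me0 ww'; exact: unit_of_isotope me0 ww' hE.
split; first by exists u, v.
move=> phi; have isoP := isotope_isoP mC mA me m_lin phi wI.
exact: iff_trans (eq_alg_iso m phi hE) isoP.
Qed.
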